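(* Let $\Gamma$ and $G$ be topological groups, $A$ a tree, and $\mathcal I$ a cellular $(\Gamma,A)$-groupoid. Then the map $\kappa\colon\mathrm{Rep}^G_{\mathrm{cell}}(\mathcal I)\to\overline{\mathrm{Rep}}^{\,G}_{\mathrm{cell}}(\mathcal I)$ is surjective.
   Context: A tree is a contractible graph (1-dimensional CW-complex). A $(\Gamma,A)$-groupoid: subspace $\mathcal I\subset\Gamma\times A$ with $\mathcal I\cap(\Gamma\times\{a\})=\tilde{\mathcal I}_a\times\{a\}$, $\tilde{\mathcal I}_a$ closed subgroups (identified with $\mathcal I_a$). $e(a)$: cell whose open cell contains $a$. Cellular: $\mathcal I_a=\mathcal I_b$ when $e(a)=e(b)$ (written $\mathcal I(e)$), and locally maximal (each $a$ and neighbourhood $B$ admit open $U$, $a\in U\subset B$, homotopy $\rho_t\colon U\to U$, $\rho_0=\mathrm{id}$, $\rho_1\equiv a$, $\mathcal I_u\subset\mathcal I_{\rho_t(u)}$); thus $\mathcal I(e)\subset\mathcal I(v)$ for a vertex $v$ of an edge $e$. A cellular representation is a continuous $\beta\colon\mathcal I\to G$, homomorphism on each $\mathcal I_a$, with $\beta_a=\beta_b$ when $e(a)=e(b)$; $\mathrm{Rep}^G_{\mathrm{cell}}(\mathcal I)$ is the set of these modulo conjugation by a constant $g\in G$. $\overline{\mathrm{Rep}}^{\,G}_{\mathrm{cell}}(\mathcal I)$: families $(b_e)$ over cells with $b_e$ a $G$-conjugacy class of continuous homomorphisms $\mathcal I(e)\to G$ and $b_e=b_v|_{\mathcal I(e)}$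 for each vertex $v$ of each edge $e$. $\kappa$ sends $\beta$ to $([\beta_e])_e$. *)

From HB Require Import structures.
From mathcomp Require Import all_boot all_order all_algebra.
From mathcomp Require Import all_classical all_reals all_analysis.
Set Implicit Arguments. Unset Strict Implicit. Unset Printing Implicit Defensive.
Local Open Scope classical_set_scope.

Record topGroup := TopGroup {
  tg_car :> topologicalType;
  tg_mul : tg_car -> tg_car -> tg_car;
  tg_inv : tg_car -> tg_car;
  tg_one : tg_car;
  tg_mulA : forall x y z, tg_mul x (tg_mul y z) = tg_mul (tg_mul x y) z;
  tg_mul1g : forall x, tg_mul tg_one x = x;
  tg_mulg1 : forall x, tg_mul x tg_one = x;
  tg_mulVg : forall x, tg_mul (tg_inv x) x = tg_one;
  tg_mulgV : forall x, tg_mul x (tg_inv x) = tg_one;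
  tg_mul_cont : continuous (fun p : tg_car * tg_car => tg_mul p.1 p.2);
  tg_inv_cont : continuous tg_inv }.

Section TopGroupDefs.
Variables (Gam G : topGroup).

Definition closed_subgroup (H : set Gam) : Prop :=
  [/\ H (tg_one Gam),
      (forall x y, H x -> H y -> H (tg_mul x y)),
      (forall x, H x -> H (tg_inv x)) & closed H].

(** [f] restricted to the subgroup [H] is a continuous homomorphism [H -> G]
    (only the values of [f] on [H] matter; [H] carries the subspace topology) *)
Definition cont_hom_on (H : set Gam) (f : Gam -> G) : Prop :=
  {within H, continuous f} /\
  (forall x y, H x -> H y -> f (tg_mul x y) = tg_mul (f x) (f y)).

Definition conj_on (H : set Gam) (f1 f2 : Gam -> G) : Prop :=
  exists g : G, forall x, H x -> f1 x = tg_mul (tg_mul g (f2 x)) (tg_inv g).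

End TopGroupDefs.

(** A graph (1-dimensional CW complex) is given by its set of vertices [V]
    (0-cells), its set of edges [E] (1-cells) and the two endpoints
    [src e], [tgt e] of each edge (attaching map). *)
Section Graphs.
Variables (V E : Type) (src tgt : E -> V).

Definition ostart (s : E * bool) : V := if s.2 then src s.1 else tgt s.1.
Definition oend (s : E * bool) : V := if s.2 then tgt s.1 else src s.1.

Fixpoint is_walk (u v : V) (s : list (E * bool)) : Prop :=
  match s with
  | nil => u = v
  | st :: s' => ostart st = u /\ is_walk (oend st) v s'
  end.

Fixpoint reduced (s : list (E * bool)) : Prop :=
  match s with
  | st1 :: ((st2 :: _) as s') =>
      ~ (st1.1 = st2.1 /\ st1.2 = ~~ st2.2) /\ reduced s'
  | _ => True
  end.

(** A tree = contractible graph, i.e. a connected graph without cycles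
    (no nontrivial reduced closed edge path; this also excludes loops and
    multiple edges). *)
Definition is_tree : Prop :=
  (forall u v : V, exists s, is_walk u v s) /\
  (forall (v : V) s, is_walk v v s -> reduced s -> s = nil).

End Graphs.

Section Groupoids.
Variables (Gam G : topGroup) (V E : Type) (src tgt : E -> V).

(** A cellular (Gam, A)-groupoid over the tree A, described cellwise:
    the closed subgroup I(v) at each vertex, I(e) at each edge, with
    I(e) contained in I(v) for both vertices v of e (local maximality). *)
Definition cellular_groupoid (Iv : V -> set Gam) (Ie : E -> set Gam) : Prop :=
  [/\ (forall v, closed_subgroup (Iv v)),
      (forall e, closed_subgroup (Ie e)),
      (forall e, Ie e `<=` Iv (src e)) &
      (forall e, Ie e `<=` Iv (tgt e))].

(** A cellular representation beta : I -> G, given cellwise by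
    beta_v : I(v) -> G and beta_e : I(e) -> G (continuous homomorphisms),
    which glue continuously: beta_e is the restriction of beta_v for each
    vertex v of e. *)
Definition cellular_rep (Iv : V -> set Gam) (Ie : E -> set Gam)
    (bv : V -> Gam -> G) (be : E -> Gam -> G) : Prop :=
  [/\ (forall v, cont_hom_on (Iv v) (bv v)),
      (forall e, cont_hom_on (Ie e) (be e)),
      (forall e x, Ie e x -> be e x = bv (src e) x) &
      (forall e x, Ie e x -> be e x = bv (tgt e) x)].

(** An element of bar-Rep^G_cell(I), given by representatives
    fv v, fe e of the conjugacy classes b_v, b_e: each a continuous hom,
    and b_e = b_v|_{I(e)} for each vertex v of each edge e. *)
Definition rep_bar_cell (Iv : V -> set Gam) (Ie : E -> set Gam)
    (fv : V -> Gam -> G) (fe : E -> Gam -> G) : Prop :=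
  [/\ (forall v, cont_hom_on (Iv v) (fv v)),
      (forall e, cont_hom_on (Ie e) (fe e)),
      (forall e, conj_on (Ie e) (fe e) (fv (src e))) &
      (forall e, conj_on (Ie e) (fe e) (fv (tgt e)))].

End Groupoids.

(** Lift b_v to the representative fv_v ^ c_v for conjugators c_v still to be
    chosen.  If a_e, a'_e conjugate fv at src e, resp. tgt e, into fe_e, the
    two lifts agree on I(e) as soon as c_(src e) = a_e a'_e^-1 c_(tgt e); so c
    must be a potential for the edge labelling e |-> a_e a'_e^-1.  On a tree
    every labelling has one: the product of the labels along a closed edge
    path is 1, since cancelling backtracks reduces the path to the empty one,
    so c_v can be taken as the product along any path from v to a base
    vertex. *)
From HB Require Import structures.
From mathcomp Require Import all_boot all_order all_algebra.
From mathcomp Require Import all_classical all_reals all_analysis.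
From mathcomp Require Import monoid.

Set Implicit Arguments.
Unset Strict Implicit.
Unset Printing Implicit Defensive.

Local Open Scope classical_set_scope.
Local Open Scope group_scope.

Section Walks.
Variables (V E : Type) (src tgt : E -> V).

Local Notation is_walk := (is_walk src tgt).
Local Notation ostart := (ostart src tgt).
Local Notation oend := (oend src tgt).

Definition oflip (p : E * bool) : E * bool := (p.1, ~~ p.2).

Definition rev_walk (s : seq (E * bool)) : seq (E * bool) := rev (map oflip s).

Lemma ostart_oflip p : ostart (oflip p) = oend p.
Proof. by case: p => e []. Qed.

Lemma oend_oflip p : oend (oflip p) = ostart p.
Proof. by case: p => e []. Qed.

Lemma is_walk_cat u w s1 s2 :
  is_walk u w (s1 ++ s2) <-> exists x, is_walk u x s1 /\ is_walk x w s2.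
Proof.
elim: s1 u => [|p s1 IH] u /=.
  by split=> [h|[x [-> h]]]; first exists u.
split=> [[<- /IH [x [h1 h2]]]|[x [[<- h1] h2]]]; first by exists x.
by split=> //; apply/IH; exists x.
Qed.

Lemma is_walk_rev u w s : is_walk u w s -> is_walk w u (rev_walk s).
Proof.
elim: s u => [|p s IH] u /=; first by move=> ->.
move=> [<- hs]; rewrite /rev_walk /= rev_cons -cats1.
apply/is_walk_cat; exists (oend p); split; first exact: IH.
by rewrite /= ostart_oflip oend_oflip.
Qed.

Lemma not_reduced_backtrack s :
  ~ reduced s -> exists s1 p s2, s = s1 ++ [:: p, oflip p & s2].
Proof.
elim: s => [|p s IH] /=; first by case.
case: s IH => [|q s] IH /=; first by case.
move=> nred.
have [[e_pq b_pq]|not_back] := pselect (p.1 = q.1 /\ p.2 = ~~ q.2).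
  exists [::], p, s; congr [:: _, _ & _].
  by rewrite /oflip e_pq b_pq negbK -surjective_pairing.
have [|s1 [r [s2 ->]]] := IH; first by move=> red; apply: nred.
by exists (p :: s1), r, s2.
Qed.

Lemma is_walk_backtrack u v s1 p s2 :
  is_walk u v (s1 ++ [:: p, oflip p & s2]) -> is_walk u v (s1 ++ s2).
Proof.
move=> /is_walk_cat [x [h1 /= [px [_ h2]]]].
apply/is_walk_cat; exists x; split=> //.
by rewrite -px -oend_oflip.
Qed.

End Walks.

Section TreePotential.
Variables (G : groupType) (V E : Type) (src tgt : E -> V) (k : E -> G).

Definition olabel (p : E * bool) : G := if p.2 then k p.1 else (k p.1)^-1.

Definition walk_prod (s : seq (E * bool)) : G := \prod_(p <- s) olabel p.

Lemma walk_prod_cat s1 s2 : walk_prod (s1 ++ s2) = walk_prod s1 * walk_prod s2.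
Proof. exact: big_cat. Qed.

Lemma walk_prod_cons p s : walk_prod (p :: s) = olabel p * walk_prod s.
Proof. exact: big_cons. Qed.

Lemma olabel_oflip p : olabel (oflip p) = (olabel p)^-1.
Proof. by case: p => e []; rewrite /olabel /= ?invgK. Qed.

Lemma walk_prod_rev s : walk_prod (rev_walk s) = (walk_prod s)^-1.
Proof.
rewrite /walk_prod /rev_walk -map_rev big_map -[s in RHS]revK -prodgV.
by apply: eq_bigr => p _; rewrite olabel_oflip.
Qed.

Lemma walk_prod_backtrack s1 p s2 :
  walk_prod (s1 ++ [:: p, oflip p & s2]) = walk_prod (s1 ++ s2).
Proof.
by rewrite !walk_prod_cat !walk_prod_cons olabel_oflip mulVKg.
Qed.

Hypothesis tree : is_tree src tgt.

Lemma tree_closed_walk_prod v s : is_walk src tgt v v s -> walk_prod s = 1.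
Proof.
move: {2}(size s) (leqnn (size s)) => n; elim: n s => [|n IH] s size_s walk_s.
  by case: s size_s {walk_s} => // _; rewrite /walk_prod big_nil.
have [red|nred] := pselect (reduced s).
  by rewrite (tree.2 v s walk_s red) /walk_prod big_nil.
have [s1 [p [s2 def_s]]] := not_reduced_backtrack nred; subst s.
rewrite walk_prod_backtrack; apply: IH _ _ (is_walk_backtrack walk_s).
by move: size_s; rewrite !size_cat /= !addnS ltnS => /ltnW.
Qed.

Lemma tree_potential : exists c : V -> G, forall e, c (src e) = k e * c (tgt e).
Proof.
have [[v0]|noV] := pselect (inhabited V); last first.
  by exists (fun=> 1) => e; case: noV; exact: inhabits (src e).
have [w walk_w] := choice (fun v => tree.1 v v0).
exists (fun v => walk_prod (w v)) => e.
have cycle_e : is_walk src tgt v0 v0 (rev_walk (w (src e)) ++ (e, true) :: w (tgt e)).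
  apply/is_walk_cat; exists (src e); split; first exact/is_walk_rev/walk_w.
  by split; last exact: walk_w.
move: (tree_closed_walk_prod cycle_e).
rewrite walk_prod_cat walk_prod_cons walk_prod_rev.
by move/mulg1_eq; rewrite invgK.
Qed.

End TreePotential.

Definition tg_group (G : topGroup) : Type := tg_car G.
HB.instance Definition _ (G : topGroup) := Choice.on (tg_group G).
HB.instance Definition _ (G : topGroup) := isGroup.Build (tg_group G)
  (@tg_mulA G) (@tg_mul1g G) (@tg_mulg1 G) (@tg_mulVg G) (@tg_mulgV G).

Section TopGroupConjugation.
Variables (Gam G : topGroup).

Lemma continuous_tg_mul (T : topologicalType) (f g : T -> G) :
  continuous f -> continuous g -> continuous (fun t => tg_mul (f t) (g t)).
Proof.
move=> cf cg t.
apply: (@continuous_comp _ _ _ (fun t => (f t, g t)) (fun p : G * G => tg_mul p.1 p.2)).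
  by apply: cvg_pair; [apply: cf | apply: cg].
exact: tg_mul_cont.
Qed.

Lemma conjg_continuous (c : tg_group G) : continuous (fun x : G => (x : tg_group G) ^ c).
Proof.
have cst_cont (b : G) : continuous (fun _ : G => b) by move=> x; apply: cvg_cst.
exact: continuous_tg_mul (cst_cont _) (continuous_tg_mul (fun x => cvg_id) (cst_cont _)).
Qed.

Lemma conj_onE (H : set Gam) (f1 f2 : Gam -> G) :
  conj_on H f1 f2 <-> exists c : tg_group G, forall x, H x -> f1 x = (f2 x : tg_group G) ^ c.
Proof.
have conjE (g y : tg_group G) : tg_mul (tg_mul g y) (tg_inv g) = y ^ g^-1.
  by rewrite conjgE invgK mulgA.
split=> [[g Hg]|[c Hc]]; [exists (g : tg_group G)^-1 | exists c^-1] => x Hx.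
  by rewrite Hg // conjE.
by rewrite Hc // conjE invgK.
Qed.

Lemma cont_hom_onS (H H' : set Gam) (f : Gam -> G) :
  H' `<=` H -> cont_hom_on H f -> cont_hom_on H' f.
Proof.
move=> sub [cf hf]; split; first exact: continuous_subspaceW cf.
by move=> x y /sub Hx /sub Hy; apply: hf.
Qed.

Lemma cont_hom_on_conj (H : set Gam) (f : Gam -> G) (c : tg_group G) :
  cont_hom_on H f -> cont_hom_on H (fun x => (f x : tg_group G) ^ c).
Proof.
move=> [cf hf]; split.
  apply: (@within_continuous_comp _ _ _ H f (fun y : G => (y : tg_group G) ^ c)) cf.
  by move=> y _; apply: conjg_continuous.
by move=> x y Hx Hy; rewrite hf // conjMg.
Qed.

End TopGroupConjugation.

Theorem lemma5p14 (Gam G : topGroup) (V E : Type) (src tgt : E -> V)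
    (tree_A : is_tree src tgt)
    (Iv : V -> set Gam) (Ie : E -> set Gam)
    (cellI : cellular_groupoid src tgt Iv Ie)
    (fv : V -> Gam -> G) (fe : E -> Gam -> G)
    (hb : rep_bar_cell src tgt Iv Ie fv fe) :
  exists (bv : V -> Gam -> G) (be : E -> Gam -> G),
    cellular_rep src tgt Iv Ie bv be /\
    (forall v, conj_on (Iv v) (bv v) (fv v)) /\
    (forall e, conj_on (Ie e) (be e) (fe e)).
Proof.
case: hb => hom_fv _ conj_src conj_tgt; case: cellI => _ _ sub_src _.
have [a Ha] := choice (fun e => (conj_onE _ _ _).1 (conj_src e)).
have [a' Ha'] := choice (fun e => (conj_onE _ _ _).1 (conj_tgt e)).
have [c Hc] := tree_potential (fun e => a e * (a' e)^-1) tree_A.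
pose bv v x := (fv v x : tg_group G) ^ c v.
have glue e x : Ie e x -> bv (src e) x = bv (tgt e) x.
  move=> Iex; rewrite /bv Hc conjgM; congr (_ ^ _).
  by rewrite conjgM -(Ha e x Iex) (Ha' e x Iex) conjgK.
exists bv, (fun e => bv (src e)); split; [split|split].
- by move=> v; apply: cont_hom_on_conj.
- by move=> e; apply: cont_hom_onS (sub_src e) (cont_hom_on_conj _ (hom_fv _)).
- by [].
- exact: glue.
- by move=> v; apply/conj_onE; exists (c v).
- move=> e; apply/conj_onE; exists ((a e)^-1 * c (src e)) => x Iex.
  by rewrite conjgM (Ha e x Iex) conjgK.
Qed.
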